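(* Let $\mathcal C$ be a linear $[n,k]$ MDS code over $F$ and let $L\in\mathbb Z^+$ satisfy $L\le\binom{n-1}{k-1}$. If $\mathcal C$ is strongly-$(\tau,L)$-list decodable (for some nonnegative $\tau\in\frac{1}{L+1}\mathbb Z$), then $\tau\le\frac{L(n-k)}{L+1}$.
   Context: $F=\mathrm{GF}(q)$; $\mathsf w(\cdot)$ denotes Hamming weight. For $L\in\mathbb Z^+$ and nonnegative $\tau\in\frac{1}{L+1}\mathbb Z$ (rationals of the form $b/(L+1)$, $b\in\mathbb Z$), a code $\mathcal C\subseteq F^n$ is strongly-$(\tau,L)$-list decodable if there do not exist $y\in F^n$ and $L+1$ distinct codewords $c_0,\dots,c_L\in\mathcal C$ with $\sum_{m=0}^{L}\mathsf w(y-c_m)\le(L+1)\tau$. *)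

From mathcomp Require Import all_boot all_order all_algebra.
Set Implicit Arguments. Unset Strict Implicit. Unset Printing Implicit Defensive.
Import GRing.Theory Num.Theory.
Local Open Scope ring_scope.

Definition hweight (F : finFieldType) (n : nat) (v : 'rV[F]_n) : nat :=
  #|[set i : 'I_n | v 0 i != 0]|.

Definition is_MDS (F : finFieldType) (n : nat) (C : {vspace 'rV[F]_n}) (k : nat) : Prop :=
  \dim C = k /\ forall c : 'rV[F]_n, c \in C -> c != 0 -> (n - k + 1 <= hweight c)%N.

Definition strongly_list_decodable (F : finFieldType) (n : nat)
    (C : {vspace 'rV[F]_n}) (tau : rat) (L : nat) : Prop :=
  ~ exists (y : 'rV[F]_n) (c : 'I_L.+1 -> 'rV[F]_n),
      injective c /\ (forall m, c m \in C) /\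
      ((\sum_(m < L.+1) hweight (y - c m))%:R <= (L.+1)%:R * tau :> rat).

From mathcomp Require Import all_boot all_order all_algebra.
From mathcomp Require Import zify.
Set Implicit Arguments. Unset Strict Implicit. Unset Printing Implicit Defensive.
Import Order.TTheory GRing.Theory Num.Theory.
Local Open Scope ring_scope.

(* Fix a coordinate i0. In an MDS code, every set S of n - k + 1 coordinates
   containing i0 is the support of a codeword taking the value 1 at i0: the
   k-dimensional code has a nonzero word vanishing on the k - 1 coordinates
   outside S, and the minimum distance forces its support to be all of S.
   The 'C(n-1, k-1) choices of S give distinct codewords, each at distance
   n - k from the unit vector e_i0, which is at distance 1 from the codeword 0.
   So e_i0 has L + 1 codewords at total distance L(n - k) + 1, hence
   (L + 1) tau < L(n - k) + 1, and integrality of (L + 1) tau concludes. *)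

Lemma dimv_rV (F : fieldType) (n : nat) (U : {vspace 'rV[F]_n}) : (\dim U <= n)%N.
Proof. by have := dimvS (subvf U); rewrite dimvf /dim /= mul1n. Qed.

Lemma vspace_vanishing_nonzero (F : fieldType) (n : nat) (U : {vspace 'rV[F]_n})
    (D : {set 'I_n}) :
  (#|D| < \dim U)%N -> exists c, [/\ c \in U, c != 0 & {in D, forall j, c 0 j = 0}].
Proof.
move=> ltDU.
pose P : 'M[F]_(n, #|D|) := colsub (@enum_val _ (mem D)) 1%:M.
pose f : 'Hom('rV[F]_n, 'rV[F]_#|D|) := linfun (mulmxr P).
have fE c : f c = colsub enum_val c by rewrite lfunE /= mulmx_colsub mulmx1.
have ker_gt0 : (0 < \dim (U :&: lker f))%N.
  have := leq_ltn_trans (dimv_rV (f @: U)%VS) ltDU.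
  by rewrite -(limg_ker_dim f U) -{1}[\dim (f @: U)]add0n ltn_add2r.
exists (vpick (U :&: lker f)); split.
- by have := memv_pick (U :&: lker f); rewrite memv_cap => /andP[].
- by rewrite vpick0 -dimv_eq0 -lt0n.
- move=> j jD; have := memv_pick (U :&: lker f).
  rewrite memv_cap memv_ker fE => /andP[_ /eqP/matrixP/(_ 0 (enum_rank_in jD j))].
  by rewrite !mxE enum_rankK_in.
Qed.

Definition hsupp (R : nmodType) (n : nat) (v : 'rV[R]_n) : {set 'I_n} :=
  [set i | v 0 i != 0].

Lemma hweightE (F : finFieldType) (n : nat) (v : 'rV[F]_n) : hweight v = #|hsupp v|.
Proof. by []. Qed.

Lemma hsupp_subset (R : nmodType) (n : nat) (v : 'rV[R]_n) (A : {set 'I_n}) :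
  (forall j, j \notin A -> v 0 j = 0) -> hsupp v \subset A.
Proof. by move=> vA; apply/subsetP => j; rewrite inE; apply: contraR => /vA ->. Qed.

Lemma hsuppZ (R : idomainType) (n : nat) (a : R) (v : 'rV[R]_n) :
  a != 0 -> hsupp (a *: v) = hsupp v.
Proof. by move=> a0; apply/setP => j; rewrite !inE mxE mulf_eq0 negb_or a0. Qed.

Lemma hsupp_delta (R : nzRingType) (n : nat) (i : 'I_n) :
  hsupp (delta_mx 0 i : 'rV[R]_n) = [set i].
Proof.
by apply/setP => j; rewrite !inE mxE eqxx; case: (j == i); rewrite /= ?oner_eq0 ?eqxx.
Qed.

Lemma hsupp_delta_sub (R : nzRingType) (n : nat) (i : 'I_n) (c : 'rV[R]_n) :
  c 0 i = 1 -> hsupp (delta_mx 0 i - c) = hsupp c :\ i.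
Proof.
move=> ci; apply/setP => j; rewrite !inE !mxE eqxx /=.
by have [->|_] := eqVneq j i; rewrite ?ci ?subrr ?eqxx // sub0r oppr_eq0.
Qed.

Lemma injective_family (T : finType) (P : {pred T}) (L : nat) :
  (L <= #|P|)%N -> exists f : 'I_L -> T, injective f /\ forall m, f m \in P.
Proof.
move=> LP; exists (fun m => enum_val (widen_ord LP m)); split=> [m1 m2|m].
  by move=> /= /enum_val_inj/(congr1 val) /= /val_inj.
exact: enum_valP.
Qed.

Lemma card_draws_avoiding (n k : nat) (i0 : 'I_n) : (0 < k)%N -> (k <= n)%N ->
  #|[set A : {set 'I_n} | A \subset [set~ i0] & #|A| == (n - k)%N]| = 'C(n.-1, k.-1).
Proof.
move=> k_gt0 kn; rewrite cards_draws cardsC1 card_ord -bin_sub; last by lia.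
by congr 'C(_, _); lia.
Qed.

Section MDSCodewords.

Variables (F : finFieldType) (n k : nat) (C : {vspace 'rV[F]_n}).
Hypotheses (C_MDS : is_MDS C k) (k_gt0 : (0 < k)%N).

Lemma MDS_dim_le : (k <= n)%N.
Proof. by case: C_MDS => <- _; apply: dimv_rV. Qed.

Lemma MDS_hsupp_full c (S : {set 'I_n}) :
  c \in C -> c != 0 -> hsupp c \subset S -> #|S| = (n - k).+1 -> hsupp c = S.
Proof.
case: C_MDS => _ wt cC c0 cS cardS; apply/eqP; rewrite eqEcard cS cardS /=.
by rewrite -hweightE -addn1; apply: wt.
Qed.

Lemma MDS_codeword_hsupp (S : {set 'I_n}) i :
  #|S| = (n - k).+1 -> i \in S -> exists2 c, c \in C & hsupp c = S /\ c 0 i = 1.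
Proof.
move=> cardS iS; case: (C_MDS) => dimC _.
have [c [cC c0 cS]] : exists c, [/\ c \in C, c != 0 & {in ~: S, forall j, c 0 j = 0}].
  apply: vspace_vanishing_nonzero; have := cardsC S; rewrite card_ord dimC.
  have := MDS_dim_le; lia.
have suppc : hsupp c = S.
  apply: MDS_hsupp_full => //; apply: hsupp_subset => j jS; apply: cS.
  by rewrite inE.
have ci0 : c 0 i != 0 by move: iS; rewrite -suppc inE.
exists ((c 0 i)^-1 *: c); first exact: rpredZ.
by rewrite hsuppZ ?invr_eq0 // mxE mulVf.
Qed.

Lemma MDS_codewords_through (i0 : 'I_n) (L : nat) : (L <= 'C(n.-1, k.-1))%N ->
  exists cw : 'I_L -> 'rV[F]_n,
    [/\ injective cw, forall m, cw m \in C, forall m, cw m 0 i0 = 1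
      & forall m, hweight (cw m) = (n - k).+1].
Proof.
rewrite -(card_draws_avoiding i0 k_gt0 MDS_dim_le) => /injective_family[A [A_inj A_draw]].
have A_i0 m : i0 \notin A m /\ #|A m| = (n - k)%N.
  move: (A_draw m); rewrite inE => /andP[/subsetP sub /eqP ->]; split=> //.
  by apply/negP => /sub; rewrite !inE eqxx.
have /fin_all_exists2[cw cwC cw_supp] m :
    exists2 c, c \in C & hsupp c = i0 |: A m /\ c 0 i0 = 1.
  have [i0A cardA] := A_i0 m.
  by apply: MDS_codeword_hsupp; rewrite ?setU11 // cardsU1 i0A cardA.
exists cw; split=> [m1 m2 | // | m | m]; last 2 first.
- by have [_ ->] := cw_supp m.
- by have [i0A cardA] := A_i0 m; rewrite hweightE (cw_supp m).1 cardsU1 i0A cardA.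
move=> /(congr1 (@hsupp F n)); rewrite (cw_supp m1).1 (cw_supp m2).1.
move=> /(congr1 (fun S => S :\ i0)); rewrite !setU1K ?(A_i0 m1).1 ?(A_i0 m2).1 //.
exact: A_inj.
Qed.

Lemma MDS_list_near_unit_vector (L : nat) : (L <= 'C(n.-1, k.-1))%N ->
  exists (y : 'rV[F]_n) (c : 'I_L.+1 -> 'rV[F]_n),
    [/\ injective c, forall m, c m \in C &
        (\sum_(m < L.+1) hweight (y - c m) <= (L * (n - k)).+1)%N].
Proof.
move=> LC; have n_gt0 : (0 < n)%N := leq_trans k_gt0 MDS_dim_le.
pose i0 : 'I_n := Ordinal n_gt0.
have [cw [cw_inj cwC cw_i0 cw_wt]] := MDS_codewords_through i0 LC.
have cw_neq0 m : cw m != 0.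
  by apply: contra_neq (oner_neq0 F) => cw0; rewrite -(cw_i0 m) cw0 mxE.
exists (delta_mx 0 i0), (fun m => oapp cw 0 (unlift ord0 m)); split.
- move=> m1 m2 /=.
  case: (unliftP ord0 m1) => [m1' ->|->]; case: (unliftP ord0 m2) => [m2' ->|->] //=.
  + by move/cw_inj ->.
  + by move/eqP; rewrite (negbTE (cw_neq0 _)).
  + by move/esym/eqP; rewrite (negbTE (cw_neq0 _)).
- by move=> m; case: (unlift _ _) => [m'|] /=; [apply: cwC | rewrite rpred0].
rewrite big_ord_recl /= unlift_none subr0 hweightE hsupp_delta cards1 add1n ltnS.
rewrite -[X in (X * _)%N](card_ord L) -sum_nat_const; apply/eq_leq/eq_bigr => m _.
rewrite liftK /= hweightE hsupp_delta_sub //.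
by move: (cardsD1 i0 (hsupp (cw m))); rewrite -hweightE cw_wt inE cw_i0 oner_neq0 => -[].
Qed.

End MDSCodewords.

Theorem mainTheorem7 (F : finFieldType) (n k : nat) (C : {vspace 'rV[F]_n})
  (L : nat) (tau : rat) :
  is_MDS C k -> (0 < k)%N ->
  (0 < L)%N -> (L <= 'C(n.-1, k.-1))%N ->
  0 <= tau -> (exists b : int, tau * (L.+1)%:R = b%:~R) ->
  strongly_list_decodable C tau L ->
  tau <= (L * (n - k))%:R / (L.+1)%:R.
Proof.
move=> C_MDS k_gt0 _ LC _ [b tauLb] C_sld.
have [y [c [c_inj cC wt]]] := MDS_list_near_unit_vector C_MDS k_gt0 LC.
rewrite ler_pdivlMr ?ltr0Sn // tauLb pmulrn ler_int.
rewrite leNgt; apply/negP => lt_b; apply: C_sld; exists y, c; do !split => //.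
rewrite mulrC tauLb pmulrn ler_int.
apply: (@le_trans _ _ (L * (n - k)).+1%:Z); first by rewrite lez_nat.
by rewrite -addn1 PoszD lezD1.
Qed.
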